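(* Let $I$ be a countable index set with nested finite subsets $I_1\subset I_2\subset\cdots$, $\bigcup_nI_n=I$, let $W$ be a compact Hausdorff space, $m:\mathcal{F}[I]\to C^*(W)$ a frame measure function and $p\in\mathbb{N}^*$. Then there exists $w_p\in W$ such that $\mu(\mathcal{F})(p)=m(\mathcal{F})(w_p)$ for all $\mathcal{F}\in\mathcal{F}[I]$.
   Context: $\mathcal{F}[I]$: families $\{f_i\}_{i\in I}$ in a separable Hilbert space that are frames for their closed span; $\tilde f_i=S^{-1}f_i$ canonical dual; $b_n(\mathcal{F})=\sum_{i\in I_n}\langle f_i,\tilde f_i\rangle$, $a_n(\mathcal{F})=b_n(\mathcal{F})/|I_n|$. $\mathbf{x}\approx\mathbf{y}$ iff $\lim_n(x_n-y_n)/|I_n|=0$; for nonnegative sequences $\mathbf{y}\leqq\mathbf{x}$ iff $\liminf_n(x_n-y_n)/|I_n|\ge0$. Frame compatible sequences: nonnegative $\mathbf{x}$ with $0\le x_1\le|I_1|$, $0\le x_i-x_{i-1}\le|I_i\setminus I_{i-1}|$; $X$ their set, $X^+=\{c\mathbf{x}:\mathbf{x}\in X, c\ge0\}$, $X^{\mathbb{R}}=X^+-X^+$. $C^*(W)$: real continuous functions on $W$. A sequence measure function is a linear $m:X^{\mathbb{R}}\to C^*(W)$ with $m(\mathbf{x})=m(\mathbf{y})\iff\mathbf{x}\approx\mathbf{y}$ on $X^{\mathbb{R}}$, $m(\mathbf{x})\le m(\mathbf{y})\iff\mathbf{x}\leqq\mathbf{y}$ on $X^+$, and $m((|I_1|,|I_2|,\dots))=1$;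 a frame measure function is $\mathcal{F}\mapsto m(b(\mathcal{F}))$ for such $m$. $\mathbb{N}^*$: free ultrafilters on $\mathbb{N}$; $p\text{-}\lim$ the ultrafilter limit of a bounded sequence. The ultrafilter frame measure function is $\mu(\mathcal{F})(p)=p\text{-}\lim_n a_n(\mathcal{F})$. *)

From HB Require Import structures.
From mathcomp Require Import all_boot all_order all_algebra.
From mathcomp Require Import all_classical all_reals all_analysis.
From mathcomp Require Import finmap complex.
From Stdlib Require Import ClassicalEpsilon.
Import Order.TTheory GRing.Theory Num.Theory.
Import numFieldNormedType.Exports.

Set Implicit Arguments.
Unset Strict Implicit.
Unset Printing Implicit Defensive.

Local Open Scope classical_set_scope.
Local Open Scope ring_scope.

Section Hilbert.
Variables (R : realType) (H : lmodType R[i]) (ip : H -> H -> R[i]).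

Definition inner_product : Prop :=
  [/\ forall (a : R[i]) (x y z : H), ip (a *: x + y) z = a * ip x z + ip y z,
      forall x y : H, ip y x = (ip x y)^*,
      forall x : H, 0 <= ip x x
    & forall x : H, ip x x = 0 -> x = 0].

Definition hnorm (x : H) : R := Num.sqrt (complex.Re (ip x x)).
Definition hdist (x y : H) : R := hnorm (x - y).

Definition hcvg (u : nat -> H) (l : H) : Prop :=
  forall e : R, 0 < e -> exists N : nat, forall n, (N <= n)%N -> hdist (u n) l < e.

Definition hcauchy (u : nat -> H) : Prop :=
  forall e : R, 0 < e -> exists N : nat,
    forall n k, (N <= n)%N -> (N <= k)%N -> hdist (u n) (u k) < e.

Definition hcomplete : Prop := forall u, hcauchy u -> exists l, hcvg u l.

Definition hclosure (A : set H) : set H :=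
  [set x | forall e : R, 0 < e -> exists y, A y /\ hdist x y < e].

Definition hseparable : Prop :=
  exists D : set H, countable D /\ forall x, hclosure D x.

Definition hlim (u : nat -> H) : H := epsilon (inhabits 0) (hcvg u).

Variable I : choiceType.

Definition hspan (F : I -> H) : set H :=
  [set x | exists (s : seq I) (c : I -> R[i]), x = \sum_(i <- s) c i *: F i].

Definition closed_span (F : I -> H) : set H := hclosure (hspan F).

Definition abs2 (z : R[i]) : R := complex.Re (z * z^*).

Definition frame_for_span (F : I -> H) : Prop :=
  exists A B : R, 0 < A /\ 0 < B /\
    forall g, closed_span F g ->
      ((A * hnorm g ^+ 2)%:E <= \esum_(i in [set: I]) (abs2 (ip g (F i)))%:E
        <= (B * hnorm g ^+ 2)%:E)%E.

Variable Iseq : nat -> {fset I}.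

(* frame operator S g = sum_i <g,f_i> f_i (the series converges unconditionally
   for a frame; we take the limit along the exhaustion I_n) *)
Definition frame_op (F : I -> H) (g : H) : H :=
  hlim (fun n => \sum_(i <- Iseq n) ip g (F i) *: F i).

(* canonical dual  f~_i = S^{-1} f_i, S seen as an operator on the closed span *)
Definition canonical_dual (F : I -> H) (i : I) : H :=
  epsilon (inhabits 0) (fun g => closed_span F g /\ frame_op F g = F i).

Definition b_seq (F : I -> H) (n : nat) : R :=
  \sum_(i <- Iseq n) complex.Re (ip (F i) (canonical_dual F i)).

Definition card_seq (n : nat) : R := (#|` Iseq n|)%:R.

Definition a_seq (F : I -> H) (n : nat) : R := b_seq F n / card_seq n.

End Hilbert.

(* Sequences are indexed from 0: x 0 corresponds to x_1 of the paper. *)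
Section Sequences.
Variables (R : realType) (I : choiceType) (Iseq : nat -> {fset I}).

Local Notation card := (card_seq R Iseq).

Definition seq_approx (x y : nat -> R) : Prop :=
  (fun n => (x n - y n) / card n) @ \oo --> (0 : R).

Definition seq_le (y x : nat -> R) : Prop :=
  (0 <= limn_einf (fun n => ((x n - y n) / card n)%:E))%E.

Definition frame_compatible (x : nat -> R) : Prop :=
  [/\ forall n, 0 <= x n,
      0 <= x 0%N <= card 0%N
    & forall n, 0 <= x n.+1 - x n <= (#|` (Iseq n.+1 `\` Iseq n)%fset|)%:R].

Definition Xplus (x : nat -> R) : Prop :=
  exists (c : R) (y : nat -> R), 0 <= c /\ frame_compatible y /\ x = (fun n => c * y n).

Definition XR (x : nat -> R) : Prop :=
  exists y z, Xplus y /\ Xplus z /\ x = (fun n => y n - z n).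

Definition sequence_measure_function (W : topologicalType)
    (m : (nat -> R) -> W -> R) : Prop :=
  [/\ forall x, XR x -> continuous (m x),
      forall (x y : nat -> R) (a b : R), XR x -> XR y ->
        m (fun n => a * x n + b * y n) = (fun w => a * m x w + b * m y w),
      forall x y, XR x -> XR y -> (m x = m y <-> seq_approx x y),
      forall x y, Xplus x -> Xplus y -> ((forall w, m x w <= m y w) <-> seq_le x y)
    & m card = (fun _ => 1)].

End Sequences.

Definition free_ultrafilter (p : set_system nat) : Prop :=
  UltraFilter p /\ (forall n : nat, exists A, p A /\ ~ A n).

Definition plim (R : realType) (p : set_system nat) (u : nat -> R) : R :=
  epsilon (inhabits 0) (fun L : R => forall e : R, 0 < e -> p [set n | `|u n - L| < e]).

Definition ultra_mu (R : realType) (H : lmodType R[i]) (ip : H -> H -> R[i])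
    (I : choiceType) (Iseq : nat -> {fset I}) (F : I -> H) (p : set_system nat) : R :=
  plim p (a_seq ip Iseq F).

From Pilot Require Import Defs.
From HB Require Import structures.
From mathcomp Require Import all_boot all_order all_algebra.
From mathcomp Require Import all_classical all_reals all_analysis.
From mathcomp Require Import finmap complex.
From mathcomp Require Import ring lra.
From Stdlib Require Import ClassicalEpsilon.

(* The functional [phi x = p-lim x_n / |I_n|] is linear on X^R, satisfies
   [phi |x| = |phi x|] and [phi |I_n| = 1], and is nonnegative on the
   sequences that are [>= 0] for the order of the paper.  For finitely many
   [x] in X^R, the sequence [y = sum_x |x - phi x * |I_n||] is in X^R and
   [phi y = 0].  If [m y] were positive on W, by compactness it would be
   bounded below by some [d > 0], so [y - d |I_n|] would be [>= 0] and
   [phi y >= d]; hence [m y w <= 0] at some [w].  As [m] is positive,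
   [|m x w - phi x| <= m |x - phi x * |I_n|| w] and these terms sum to
   [m y w], so [m x w = phi x] for each of the [x].  By compactness again a
   single [w_p] works for every [x] in X^R.
   It remains to see that [b(F)] is frame compatible, i.e. that
   [0 <= <f_i, f~_i> <= 1].  Since [S f~_i = f_i],
   [<f_i, f~_i> = <S f~_i, f~_i> = sum_j |<f~_i, f_j>|^2 >= <f_i, f~_i>^2].
   The canonical dual exists because [S] is onto the closed span: for [h] in
   it, [||h - S h / B||^2 <= (1 - A / B) ||h||^2], so the Richardson iteration
   [g_(k+1) = g_k + (f - S g_k) / B] converges to a preimage of [f]. *)

Set Implicit Arguments.
Unset Strict Implicit.
Unset Printing Implicit Defensive.
Import Order.TTheory GRing.Theory Num.Theory.
Import numFieldNormedType.Exports.
Local Open Scope classical_set_scope.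
Local Open Scope ring_scope.

Section UltrafilterLimit.
Variables (R : realType) (p : set_system nat).
Hypotheses (p_ultra : UltraFilter p) (p_free : forall n, exists A, p A /\ ~ A n).
#[local] Existing Instance p_ultra.

Lemma free_ultra_ge N : p [set n | (N <= n)%N].
Proof.
elim: N => [|N IH]; first exact: filterS filterT.
have [A [pA nAN]] := p_free N.
apply: filterS (filterI IH pA) => n [/= Nn An].
by rewrite ltn_neqAle Nn andbT; apply/eqP => eNn; apply: nAN; rewrite eNn.
Qed.

Lemma free_ultra_cvg : p --> \oo.
Proof. by move=> A [N _ NA]; exact: filterS NA (free_ultra_ge N). Qed.

Let is_plim (u : nat -> R) (L : R) := forall e : R, 0 < e -> p [set n | `|u n - L| < e].

Lemma is_plimP (u : nat -> R) (L : R) : is_plim u L <-> u @ p --> L.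
Proof.
by rewrite cvgrPdist_lt; split=> h e /h; apply: filterS => n /=; rewrite distrC.
Qed.

Lemma ultra_cvg_bounded (u : nat -> R) M :
  (forall n, `|u n| <= M) -> exists L : R, u @ p --> L.
Proof.
move=> uM.
have u_ultra : UltraFilter (u x @[x --> p]).
  split; first exact: fmap_proper_filter.
  move=> G G_filter pG; rewrite predeqE => A; split; last exact: pG.
  move=> GA; have [//|pAC] := in_ultra_setVsetC (u @^-1` A) p_ultra.
  have GAC : G (~` A) by apply: pG; rewrite /= /fmap /= -preimage_setC.
  by have [x []] := filter_ex (filterI GA GAC).
have u_seg : (u x @[x --> p]) `[-M, M]%classic.
  apply: (@filterS _ p _ setT); last exact: filterT.
  by move=> n _ /=; rewrite in_itv /= -ler_norml.
have := @segment_compact R (-M) M; rewrite compact_ultra => /(_ _ u_ultra u_seg).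
by move=> [L [_ uL]]; exists L.
Qed.

Lemma plim_cvg (u : nat -> R) M : (forall n, `|u n| <= M) -> u @ p --> plim p u.
Proof.
move=> /ultra_cvg_bounded [L /is_plimP uL]; apply/is_plimP.
exact: (epsilon_spec (inhabits (0 : R)) (is_plim u) (ex_intro _ L uL)).
Qed.

Lemma plimE (u : nat -> R) (L : R) : u @ p --> L -> plim p u = L.
Proof.
move=> uL; have /is_plimP uplim :=
  epsilon_spec (inhabits (0 : R)) (is_plim u) (ex_intro _ L (iffRL (is_plimP _ _) uL)).
exact: cvg_unique uplim uL.
Qed.

Lemma plim_ge0 (u : nat -> R) (L : R) : u @ p --> L ->
  (forall e : R, 0 < e -> \forall n \near \oo, - e <= u n) -> 0 <= L.
Proof.
move=> uL u_ge; apply/ler_addgt0Pr => e e0; rewrite -lerBlDr sub0r.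
apply: (closed_cvg _ (@closed_ge _ (- e)) _ _ uL).
exact: free_ultra_cvg (u_ge e e0).
Qed.

End UltrafilterLimit.

Section IncrementBounded.
Variables (R : realType) (I : choiceType) (Iseq : nat -> {fset I}).
Hypothesis Iseq_nest : forall n, (Iseq n `<=` Iseq n.+1)%fset.

Local Notation card := (card_seq R Iseq).
Implicit Types (x y : nat -> R) (C : R).

Lemma Iseq_homo : {homo Iseq : n k / (n <= k)%N >-> (n `<=` k)%fset}.
Proof. exact: homo_leq (@fsubset_refl _) (@fsubset_trans _) Iseq_nest. Qed.

Definition card_step n : R := (#|` (Iseq n.+1 `\` Iseq n)%fset|)%:R.

Lemma card_seqS n : card n.+1 = card n + card_step n.
Proof. by rewrite /card_seq /card_step cardfsDS // natrB ?fsubset_leq_card // subrKC. Qed.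

Lemma frame_compatible_card : frame_compatible Iseq card.
Proof.
split=> [n|//|n]; first exact: ler0n.
  by rewrite ler0n lexx.
by rewrite card_seqS addrAC subrr add0r ler0n lexx.
Qed.

Definition increment_bounded (C : R) (x : nat -> R) :=
  [/\ 0 <= C, `|x 0%N| <= C * card 0 & forall n, `|x n.+1 - x n| <= C * card_step n].

Lemma increment_bounded_le_card C x :
  increment_bounded C x -> forall n, `|x n| <= C * card n.
Proof.
case=> _ x0 xS; elim=> // n IH; rewrite card_seqS mulrDr -[x n.+1](subrK (x n)).
by rewrite (le_trans (ler_normD _ _)) // addrC lerD.
Qed.

Lemma increment_boundedD C1 C2 x y a b :
  increment_bounded C1 x -> increment_bounded C2 y ->
  increment_bounded (`|a| * C1 + `|b| * C2) (fun n => a * x n + b * y n).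
Proof.
have comb u v c1 c2 (B : R) : `|u| <= c1 * B -> `|v| <= c2 * B ->
    `|a * u + b * v| <= (`|a| * c1 + `|b| * c2) * B.
  move=> uB vB; rewrite (le_trans (ler_normD _ _)) // !normrM mulrDl -!mulrA.
  by rewrite lerD // ler_wpM2l.
case=> C10 x0 xS [C20 y0 yS]; split; first by rewrite addr_ge0 // mulr_ge0.
  exact: comb.
move=> n; rewrite (_ : _ - _ = a * (x n.+1 - x n) + b * (y n.+1 - y n)); last by ring.
exact: comb.
Qed.

Lemma increment_bounded_norm C x :
  increment_bounded C x -> increment_bounded C (fun n => `|x n|).
Proof.
case=> C0 x0 xS; split=> // [|n]; first by rewrite normr_id.
exact: le_trans (ler_dist_dist _ _) (xS n).
Qed.

Lemma Xplus_increment_bounded y : Xplus Iseq y -> exists C, increment_bounded C y.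
Proof.
move=> [c [z [c0 [[z_ge0 /andP[_ z0] zS] ->]]]]; exists c; split=> // [|n].
  by rewrite normrM ger0_norm // ger0_norm // ler_wpM2l.
have /andP[dz0 dzS] := zS n.
by rewrite -mulrBr normrM ger0_norm // ger0_norm // ler_wpM2l.
Qed.

Lemma frame_compatible_increments (f : R -> R) C x :
  0 < C -> increment_bounded C x -> (forall a, 0 <= f a <= `|a|) ->
  frame_compatible Iseq (fun n => (f (x 0%N) + \sum_(k < n) f (x k.+1 - x k)) / C).
Proof.
move=> C0 [_ x0 xS] f_bnd.
have f_ge0 a : 0 <= f a by case/andP: (f_bnd a).
have f_le a : f a <= `|a| by case/andP: (f_bnd a).
split=> [n|/=|n /=].
- by apply: divr_ge0; [apply: addr_ge0 => //; exact: sumr_ge0 | exact: ltW].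
- rewrite big_ord0 addr0 divr_ge0 //=; last exact: ltW.
  by rewrite ler_pdivrMr // mulrC (le_trans (f_le _) x0).
- rewrite big_ord_recr /= -mulrBl addrA [_ + f (x n.+1 - x n)]addrC addrK.
  rewrite divr_ge0 //=; last exact: ltW.
  by rewrite ler_pdivrMr // mulrC (le_trans (f_le _) (xS n)).
Qed.

(* [x] is the difference of the cumulated positive and negative parts of its
   increments, both nondecreasing and, scaled by [1 / (C + 1)], frame compatible. *)
Lemma increment_bounded_XR C x : increment_bounded C x -> XR Iseq x.
Proof.
move=> xC; have C1 : 0 < C + 1 by case: xC => C0 _ _; rewrite ltr_wpDl.
have xC1 : increment_bounded (C + 1) x.
  case: xC => C0 x0 xS; have CC1 : C <= C + 1 by rewrite lerDl.
  split=> [|//|n]; first exact: ltW.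
    exact: le_trans x0 (ler_wpM2r (ler0n _ _) CC1).
  exact: le_trans (xS n) (ler_wpM2r (ler0n _ _) CC1).
pose pos a : R := (a + `|a|) / 2; pose neg a : R := (`|a| - a) / 2.
have a_le (a : R) : a <= `|a| /\ - a <= `|a| by split; [exact: ler_norm | rewrite -normrN ler_norm].
have pos_bnd a : 0 <= pos a <= `|a| by rewrite /pos; case: (a_le a) => ? ?; apply/andP; lra.
have neg_bnd a : 0 <= neg a <= `|a| by rewrite /neg; case: (a_le a) => ? ?; apply/andP; lra.
pose parts f n := (f (x 0%N) + \sum_(k < n) f (x k.+1 - x k)) / (C + 1).
exists (fun n => (C + 1) * parts pos n), (fun n => (C + 1) * parts neg n).
split; [|split].
- exists (C + 1), (parts pos); split; first exact: ltW.
  by split=> //; exact: frame_compatible_increments.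
- exists (C + 1), (parts neg); split; first exact: ltW.
  by split=> //; exact: frame_compatible_increments.
apply/funext => n; rewrite /parts !(mulrC (C + 1)) !divfK ?gt_eqF //.
elim: n => [|n IH]; first by rewrite !big_ord0 /pos /neg; lra.
by rewrite !big_ord_recr /=; move: IH; rewrite /pos /neg; lra.
Qed.

Lemma XRP x : XR Iseq x <-> exists C, increment_bounded C x.
Proof.
split=> [|[C]]; last exact: increment_bounded_XR.
move=> [y [z [/Xplus_increment_bounded[C1 yC] [/Xplus_increment_bounded[C2 zC] ->]]]].
exists (`|1| * C1 + `|-1| * C2).
rewrite (_ : (fun n => y n - z n) = (fun n => 1 * y n + (-1) * z n)).
  exact: increment_boundedD.
by apply/funext => n; rewrite mul1r mulN1r.
Qed.

Lemma XR_lin x y a b :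
  XR Iseq x -> XR Iseq y -> XR Iseq (fun n => a * x n + b * y n).
Proof.
move=> /XRP[C1 xC] /XRP[C2 yC]; apply/XRP.
by exists (`|a| * C1 + `|b| * C2); exact: increment_boundedD.
Qed.

Lemma XR_norm x : XR Iseq x -> XR Iseq (fun n => `|x n|).
Proof. by move=> /XRP[C xC]; apply/XRP; exists C; exact: increment_bounded_norm. Qed.

Lemma Xplus_XR y : Xplus Iseq y -> XR Iseq y.
Proof. by move/Xplus_increment_bounded/XRP. Qed.

Lemma frame_compatible_XR y : frame_compatible Iseq y -> XR Iseq y.
Proof.
move=> yfc; apply: Xplus_XR; exists 1, y; split=> //; split=> //.
by apply/funext => n; rewrite mul1r.
Qed.

Lemma XR_card : XR Iseq card.
Proof. exact: frame_compatible_XR frame_compatible_card. Qed.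

Lemma XR0 : XR Iseq (fun=> 0 : R).
Proof. by apply: frame_compatible_XR; split=> [n|/=|n /=]; rewrite ?subrr ?lexx ?ler0n. Qed.

Lemma XR_ratio_bounded x : XR Iseq x -> exists M, forall n, `|x n / card n| <= M.
Proof.
move=> /XRP[C xC]; exists C => n; rewrite normrM normfV [X in _ / X]ger0_norm ?ler0n //.
have [->|cn0] := eqVneq (card n) 0; first by rewrite invr0 mulr0; case: xC.
rewrite ler_pdivrMr; first exact: increment_bounded_le_card.
by rewrite lt0r cn0 ler0n.
Qed.

Lemma XR_sum (T : eqType) (s : seq T) (g : T -> nat -> R) :
  (forall t, t \in s -> XR Iseq (g t)) -> XR Iseq (fun n => \sum_(t <- s) g t n).
Proof.
elim: s => [|t s IH] sXR.
  rewrite (_ : (fun n => _) = fun=> 0); first exact: XR0.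
  by apply/funext => n; rewrite big_nil.
rewrite (_ : (fun n => _) = (fun n => 1 * g t n + 1 * \sum_(t <- s) g t n)).
  apply: XR_lin; first by apply: sXR; rewrite mem_head.
  by apply: IH => u us; apply: sXR; rewrite inE us orbT.
by apply/funext => n; rewrite big_cons !mul1r.
Qed.

Lemma XR_linear_sum (L : (nat -> R) -> R) :
  (forall x y a b, XR Iseq x -> XR Iseq y ->
     L (fun n => a * x n + b * y n) = a * L x + b * L y) ->
  forall (T : eqType) (s : seq T) (g : T -> nat -> R),
    (forall t, t \in s -> XR Iseq (g t)) ->
    L (fun n => \sum_(t <- s) g t n) = \sum_(t <- s) L (g t).
Proof.
move=> L_lin T; elim=> [|t s IH] g sXR.
  rewrite (_ : (fun n => _) = (fun n => 0 * 0 + 0 * 0)).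
    by rewrite L_lin ?mul0r ?addr0 ?big_nil //; exact: XR0.
  by apply/funext => n; rewrite big_nil mul0r addr0.
have tXR : XR Iseq (g t) by apply: sXR; rewrite mem_head.
have sXR' u : u \in s -> XR Iseq (g u) by move=> us; apply: sXR; rewrite inE us orbT.
rewrite (_ : (fun n => _) = (fun n => 1 * g t n + 1 * \sum_(t <- s) g t n)).
  by rewrite L_lin ?IH ?big_cons ?mul1r //; exact: XR_sum.
by apply/funext => n; rewrite big_cons !mul1r.
Qed.

Lemma limn_einfE (u : (\bar R)^nat) : limn_einf u = ereal_sup (range (einfs u)).
Proof. by rewrite limn_einf_lim; apply/cvg_lim => //; exact: cvg_einfs_sup. Qed.

Lemma seq_le_pointwise y x : (forall n, y n <= x n) -> seq_le Iseq y x.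
Proof.
move=> yx; rewrite /seq_le limn_einfE.
apply: (@le_trans _ _ (einfs (fun n => ((x n - y n) / card n)%:E) 0%N)).
  apply: le_ereal_inf_tmp => _ [k _ <-].
  by rewrite lee_fin divr_ge0 // subr_ge0.
by apply: ereal_sup_ubound; exists 0%N.
Qed.

Lemma seq_le_eventually y x : seq_le Iseq y x ->
  forall e : R, 0 < e -> \forall n \near \oo, - e <= (x n - y n) / card n.
Proof.
rewrite /seq_le limn_einfE => yx e e0.
have /ereal_sup_gt[_ [N _ <-]] : ((- e)%:E < ereal_sup (range (einfs
    (fun n => ((x n - y n) / card n)%:E))))%E.
  by apply: lt_le_trans yx; rewrite lte_fin oppr_lt0.
move=> eN; exists N => // n /= Nn; rewrite -lee_fin (le_trans (ltW eN)) //.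
by apply: ereal_inf_lbound; exists n.
Qed.

End IncrementBounded.

Lemma compact_finI (T : topologicalType) (J : choiceType) (D : set J) (f : J -> set T) :
  compact [set: T] -> D !=set0 -> (forall j, D j -> closed (f j)) -> finI D f ->
  \bigcap_(j in D) f j !=set0.
Proof.
move=> Tc [j Dj] f_closed f_finI.
have [t [_ t_clust]] := Tc _ (finI_filter f_finI)
  (ex_intro2 _ _ (f j) (finI_from1 _ Dj) (fun _ _ => I)).
exists t => k Dk; apply: (f_closed k Dk) => B Bt.
have := t_clust (f k) B; rewrite setIC; apply=> //.
by exists (f k); [exact: finI_from1|].
Qed.

Lemma compact_gt0_lbound (R : realType) (T : topologicalType) (f : T -> R) :
  compact [set: T] -> continuous f -> (forall t, 0 < f t) ->
  exists2 d, 0 < d & forall t, d <= f t.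
Proof.
move=> Tc f_cont f_gt0.
pose below k := [set t | f t <= k.+1%:R^-1].
have below_closed k : setT k -> closed (below k).
  by move=> _; exact: (iffLR (continuous_closedP f) f_cont _ (@closed_le _ _)).
have [D D_empty] : exists D : {fset nat},
    ~ (\bigcap_(k in [set k | k \in D]) below k !=set0).
  apply/existsNP => D_ne.
  have [t t_below] := compact_finI Tc (ex_intro _ 0%N I) below_closed
    (fun D _ => D_ne D).
  have [k fk] := ltr_add_invr (f_gt0 t); rewrite add0r in fk.
  by have := t_below k I; rewrite /below /= leNgt fk.
exists (\max_(k <- D) k).+1%:R^-1; first by rewrite invr_gt0 ltr0Sn.
move=> t; rewrite leNgt; apply/negP => ft; apply: D_empty; exists t => k kD.
rewrite /below /= (le_trans (ltW ft)) // lef_pV2 ?posrE ?ltr0Sn // ler_nat ltnS.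
exact: (@leq_bigmax_seq _ _ xpredT id k kD).
Qed.

Section Representation.
Variables (R : realType) (I : choiceType) (Iseq : nat -> {fset I}).
Hypotheses (Iseq_nest : forall n, (Iseq n `<=` Iseq n.+1)%fset)
  (Iseq_cover : forall i : I, exists n, i \in Iseq n) (I_inhabited : inhabited I).
Variables (W : topologicalType) (m : (nat -> R) -> W -> R).
Hypotheses (W_compact : compact [set: W]) (m_measure : sequence_measure_function Iseq m).
Variable p : set_system nat.
Hypotheses (p_ultra : UltraFilter p) (p_free : forall n, exists A, p A /\ ~ A n).
#[local] Existing Instance p_ultra.

Local Notation card := (card_seq R Iseq).
Local Notation XR := (XR Iseq).
Implicit Types x y u : nat -> R.

Let card_XR : XR card := XR_card R Iseq_nest.

Definition plim_ratio x := plim p (fun n => x n / card n).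

Lemma plim_ratio_cvg x : XR x -> (fun n => x n / card n) @ p --> plim_ratio x.
Proof. by move=> /(XR_ratio_bounded Iseq_nest)[M xM]; exact: plim_cvg xM. Qed.

Lemma plim_ratio_lin x y a b : XR x -> XR y ->
  plim_ratio (fun n => a * x n + b * y n) = a * plim_ratio x + b * plim_ratio y.
Proof.
move=> /plim_ratio_cvg xp /plim_ratio_cvg yp; apply: plimE.
rewrite (_ : (fun n => _ / card n) = (fun n => a * (x n / card n) + b * (y n / card n))).
  by apply: cvgD; apply: cvgMl_tmp.
by apply/funext => n; rewrite mulrDl !mulrA.
Qed.

Lemma plim_ratio_norm x : XR x -> plim_ratio (fun n => `|x n|) = `|plim_ratio x|.
Proof.
move=> /plim_ratio_cvg/cvg_norm xp; apply: plimE.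
rewrite (_ : (fun n => _ / card n) = (fun n => `|x n / card n|)) //.
by apply/funext => n; rewrite normrM normfV (ger0_norm (ler0n _ _)).
Qed.

Lemma plim_ratio_card : plim_ratio card = 1.
Proof.
apply: plimE; apply: cvg_near_cst; apply: free_ultra_cvg => //.
case: I_inhabited => i; have [N iN] := Iseq_cover i.
exists N => // n /= Nn; rewrite divff // pnatr_eq0 -lt0n cardfs_gt0.
by apply/fset0Pn; exists i; exact: (fsubsetP (Iseq_homo Iseq_nest Nn)).
Qed.

Lemma m_lin x y a b w : XR x -> XR y ->
  m (fun n => a * x n + b * y n) w = a * m x w + b * m y w.
Proof. by case: m_measure => _ m_lin _ _ _ xXR yXR; rewrite m_lin. Qed.

Lemma m_card w : m card w = 1.
Proof. by case: m_measure => _ _ _ _ ->. Qed.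

Lemma m_Xplus_diff u : XR u -> exists y z, [/\ Xplus Iseq y, Xplus Iseq z,
  u = (fun n => y n - z n) & forall w, m u w = m y w - m z w].
Proof.
move=> [y [z [yX [zX ->]]]]; exists y, z; split=> // w.
rewrite (_ : (fun n => _) = (fun n => 1 * y n + (-1) * z n)).
  by rewrite m_lin ?mul1r ?mulN1r //; exact: Xplus_XR.
by apply/funext => n; rewrite mul1r mulN1r.
Qed.

Lemma m_ge0 u : XR u -> (forall n, 0 <= u n) -> forall w, 0 <= m u w.
Proof.
move=> /m_Xplus_diff[y [z [yX zX -> mu]]] u_ge0 w; rewrite mu subr_ge0.
case: m_measure => _ _ _ m_le _; apply: (iffRL (m_le z y zX yX)) w.
by apply: seq_le_pointwise => n; rewrite -subr_ge0.
Qed.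

Lemma m_ge0_eventually u : XR u -> (forall w, 0 <= m u w) ->
  forall e : R, 0 < e -> \forall n \near \oo, - e <= u n / card n.
Proof.
move=> /m_Xplus_diff[y [z [yX zX -> mu]]] mu_ge0.
case: m_measure => _ _ _ m_le _; apply: seq_le_eventually.
by apply/(m_le z y zX yX) => w; rewrite -subr_ge0 -mu.
Qed.

Lemma m_norm x w : XR x -> `|m x w| <= m (fun n => `|x n|) w.
Proof.
move=> xXR; have axXR := XR_norm xXR.
have := m_ge0 (XR_lin 1 1 axXR xXR) _ w; have := m_ge0 (XR_lin 1 (-1) axXR xXR) _ w.
rewrite !m_lin // ler_norml => le1 le2; apply/andP; split.
  suff : 0 <= 1 * m (fun n => `|x n|) w + 1 * m x w by lra.
  by apply: le2 => n; rewrite !mul1r -lerBlDr sub0r -normrN ler_norm.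
suff : 0 <= 1 * m (fun n => `|x n|) w + -1 * m x w by lra.
by apply: le1 => n; rewrite mul1r mulN1r subr_ge0 ler_norm.
Qed.

Lemma plim_ratio_gt0 y : XR y -> (forall w, 0 < m y w) -> 0 < plim_ratio y.
Proof.
move=> yXR my_gt0.
have [d d_gt0 d_le] : exists2 d, 0 < d & forall w, d <= m y w.
  by case: m_measure => m_cont _ _ _ _; exact: compact_gt0_lbound (m_cont _ yXR) _.
have ydXR := XR_lin 1 (- d) yXR card_XR.
have yd_ge0 w : 0 <= m (fun n => 1 * y n + - d * card n) w.
  by rewrite m_lin ?m_card //; have := d_le w; lra.
have := plim_ge0 p_ultra p_free (plim_ratio_cvg ydXR) (m_ge0_eventually ydXR yd_ge0).
by rewrite plim_ratio_lin ?plim_ratio_card //; lra.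
Qed.

Lemma m_eq_plim_ratio_fset (D : {fset (nat -> R)}) : (forall x, x \in D -> XR x) ->
  exists w, forall x, x \in D -> m x w = plim_ratio x.
Proof.
move=> D_XR; pose v x n := 1 * x n + - plim_ratio x * card n.
have vXR x : x \in D -> XR (v x) by move=> /D_XR xXR; exact: XR_lin.
pose y n := \sum_(x <- D) `|v x n|.
have yXR : XR y by apply: XR_sum => x /vXR; exact: XR_norm.
have y0 : plim_ratio y = 0.
  rewrite (XR_linear_sum plim_ratio_lin) => [|x /vXR]; last exact: XR_norm.
  rewrite big_seq big1 // => x xD; rewrite plim_ratio_norm; last exact: vXR.
  by rewrite plim_ratio_lin ?plim_ratio_card ?mulr1 ?mul1r ?addrN ?normr0 //; exact: D_XR.
have [w] : exists w, ~ 0 < m y w.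
  by apply/existsNP => my_gt0; have := plim_ratio_gt0 yXR my_gt0; rewrite y0 ltxx.
move/negP; rewrite -leNgt => my_le0; exists w => x xD.
have vx_le x' : x' \in D -> `|m (v x') w| <= m (fun n => `|v x' n|) w.
  by move=> /vXR; exact: m_norm.
have rest_ge0 : 0 <= \sum_(x' <- D | x' != x) m (fun n => `|v x' n|) w.
  rewrite big_seq_cond; apply: sumr_ge0 => x' /andP[x'D _].
  exact: le_trans (normr_ge0 _) (vx_le x' x'D).
have : `|m (v x) w| <= 0.
  apply: le_trans (vx_le x xD) _; apply: le_trans my_le0.
  rewrite /y (XR_linear_sum (fun x y a b => @m_lin x y a b w)) => [|x' /vXR].
    by rewrite (bigD1_seq x) ?fset_uniq //= lerDl.
  exact: XR_norm.
rewrite normr_le0 m_lin ?m_card //; last exact: D_XR.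
by move=> /eqP; lra.
Qed.

Lemma m_represents_plim_ratio : exists w, forall x, XR x -> m x w = plim_ratio x.
Proof.
have m_closed x : XR x -> closed [set w | m x w = plim_ratio x].
  case: m_measure => m_cont _ _ _ _ /m_cont x_cont.
  exact: (iffLR (continuous_closedP _) x_cont _ (@closed_eq _ _)).
suff [w w_eq] : \bigcap_(x in XR) [set w | m x w = plim_ratio x] !=set0.
  by exists w => x /w_eq.
apply: compact_finI W_compact (ex_intro _ _ card_XR) m_closed _ => D D_XR.
have [w w_eq] := m_eq_plim_ratio_fset (fun x xD => set_mem (D_XR x xD)).
by exists w => x /w_eq.
Qed.

End Representation.

Lemma quadratic_ge0_discr (R : realFieldType) (a b c : R) :
  (forall t, 0 <= a + 2 * t * b + t ^+ 2 * c) -> 0 <= c -> b ^+ 2 <= a * c.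
Proof.
move=> q_ge0 c_ge0; have [c0|c_neq0] := eqVneq c 0.
  have [->|b_neq0] := eqVneq b 0; first by rewrite c0 expr0n mulr0.
  have := q_ge0 (- (a + 1) / (2 * b)); rewrite c0.
  have : (- (a + 1) / (2 * b)) * (2 * b) = - (a + 1) by rewrite divfK // mulf_neq0.
  nra.
have c_gt0 : 0 < c by rewrite lt0r c_neq0.
have := q_ge0 (- b / c); have : (- b / c) * c = - b by rewrite divfK.
nra.
Qed.

Lemma add_scaled_lt_half (R : realFieldType) (d1 d2 r e : R) :
  0 <= d2 -> d1 < e / 2 -> d2 < e / 2 / (`|r| + 1) -> d1 + `|r| * d2 < e.
Proof.
move=> d2_ge0 d1e d2e; have r1 : 0 < `|r| + 1 by rewrite ltr_pwDr.
have : `|r| * d2 <= (`|r| + 1) * (e / 2 / (`|r| + 1)).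
  by rewrite ler_pM // ?lerDl // ltW.
rewrite [(`|r| + 1) * _]mulrC divfK ?gt_eqF //; lra.
Qed.

Lemma geometric_eventually_lt (R : realType) (C rho e : R) :
  0 <= rho < 1 -> 0 < e -> \forall n \near \oo, C * rho ^+ n < e.
Proof.
move=> /andP[rho0 rho1] e0; have rho_lt1 : `|rho| < 1 by rewrite ger0_norm.
move/cvgrPdist_lt : (cvg_geometric C rho_lt1) => /(_ e e0).
by apply: filterS => n /=; rewrite sub0r normrN; exact: le_lt_trans (ler_norm _).
Qed.

Section ComplexFacts.
Variable R : realType.
Implicit Types (x y z : R[i]) (r : R).

Lemma ReM x y : complex.Re (x * y) = complex.Re x * complex.Re y - complex.Im x * complex.Im y.
Proof. by case: x => a b; case: y. Qed.

Lemma ReJ x : complex.Re x^* = complex.Re x.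
Proof. by case: x. Qed.

Lemma ImJ x : complex.Im x^* = - complex.Im x.
Proof. by case: x. Qed.

Lemma Re_realM r x : complex.Re ((r%:C)%C * x) = r * complex.Re x.
Proof. by case: x => a b /=; rewrite mul0r subr0. Qed.

Lemma abs2E z : abs2 z = complex.Re z ^+ 2 + complex.Im z ^+ 2.
Proof. by rewrite /abs2 ReM ReJ ImJ mulrN opprK !expr2. Qed.

Lemma abs2_ge0 z : 0 <= abs2 z.
Proof. by rewrite abs2E addr_ge0 // sqr_ge0. Qed.

Lemma Re2_le_abs2 z : complex.Re z ^+ 2 <= abs2 z.
Proof. by rewrite abs2E lerDl sqr_ge0. Qed.

Lemma Re_mulJ_le_abs2 x y (al : R) : 0 < al ->
  2 * complex.Re (x * y^*) <= al * abs2 x + al^-1 * abs2 y.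
Proof.
move=> al0; rewrite ReM ReJ ImJ !abs2E.
set a := complex.Re x; set b := complex.Im x; set c := complex.Re y; set d := complex.Im y.
have alV : al * al^-1 = 1 by rewrite divff // gt_eqF.
have := mulr_ge0 (ltW al0) (sqr_ge0 (a - al^-1 * c)).
have := mulr_ge0 (ltW al0) (sqr_ge0 (b - al^-1 * d)).
have sq u v : al * (u - al^-1 * v) ^+ 2 =
    al * u ^+ 2 - 2 * (al * al^-1) * u * v + (al * al^-1) * al^-1 * v ^+ 2 by ring.
rewrite !sq alV; lra.
Qed.

End ComplexFacts.

Lemma sum_fsetDS (I : choiceType) (V : nmodType) (A B : {fset I}) (G : I -> V) :
  (A `<=` B)%fset -> \sum_(j <- B) G j = \sum_(j <- A) G j + \sum_(j <- (B `\` A)%fset) G j.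
Proof.
move=> AB; rewrite (big_fsetID _ (mem A) B); congr (_ + _); apply: eq_fbigl => i.
  by rewrite !inE /=; apply/andP/idP => [[]//|iA]; split=> //; exact: (fsubsetP AB).
by rewrite !inE /= andbC.
Qed.

Section InnerProductSpace.
Variables (R : realType) (H : lmodType R[i]) (ip : H -> H -> R[i]).
Hypothesis ip_inner : inner_product ip.

Local Notation hnorm := (hnorm ip).
Local Notation hdist := (hdist ip).
Implicit Types (x y z : H) (r : R).

Definition re_ip x y : R := complex.Re (ip x y).

Lemma ipZl_addr (a : R[i]) x y z : ip (a *: x + y) z = a * ip x z + ip y z.
Proof. by case: ip_inner => lin _ _ _; exact: lin. Qed.

Lemma ipDl x y z : ip (x + y) z = ip x z + ip y z.
Proof. by have := ipZl_addr 1 x y z; rewrite scale1r mul1r. Qed.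

Lemma ip0l z : ip 0 z = 0.
Proof. by apply: (addrI (ip 0 z)); rewrite -ipDl !addr0. Qed.

Lemma ipZl (a : R[i]) x z : ip (a *: x) z = a * ip x z.
Proof. by rewrite -[a *: x]addr0 ipZl_addr ip0l addr0. Qed.

Lemma ipBl x y z : ip (x - y) z = ip x z - ip y z.
Proof. by rewrite ipDl -scaleN1r ipZl mulN1r. Qed.

Lemma ip_suml (T : Type) (s : seq T) (G : T -> H) z :
  ip (\sum_(t <- s) G t) z = \sum_(t <- s) ip (G t) z.
Proof. by elim: s => [|t s IH]; rewrite ?big_nil ?ip0l // !big_cons ipDl IH. Qed.

Lemma ipC x y : ip y x = (ip x y)^*.
Proof. by case: ip_inner => _ herm _ _; exact: herm. Qed.

Lemma re_ipC x y : re_ip x y = re_ip y x.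
Proof. by rewrite /re_ip ipC ReJ. Qed.

Lemma re_ipDl x y z : re_ip (x + y) z = re_ip x z + re_ip y z.
Proof. by rewrite /re_ip ipDl raddfD. Qed.

Lemma re_ipBl x y z : re_ip (x - y) z = re_ip x z - re_ip y z.
Proof. by rewrite /re_ip ipBl raddfB. Qed.

Lemma re_ipZl r x z : re_ip ((r%:C)%C *: x) z = r * re_ip x z.
Proof. by rewrite /re_ip ipZl Re_realM. Qed.

Lemma re_ipDr x y z : re_ip z (x + y) = re_ip z x + re_ip z y.
Proof. by rewrite !(re_ipC z) re_ipDl. Qed.

Lemma re_ipBr x y z : re_ip z (x - y) = re_ip z x - re_ip z y.
Proof. by rewrite !(re_ipC z) re_ipBl. Qed.

Lemma re_ipZr r x z : re_ip z ((r%:C)%C *: x) = r * re_ip z x.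
Proof. by rewrite !(re_ipC z) re_ipZl. Qed.

Lemma re_ip_ge0 x : 0 <= re_ip x x.
Proof. by case: ip_inner => _ _ /(_ x); rewrite lecE => /andP[]. Qed.

Lemma hnorm_ge0 x : 0 <= hnorm x.
Proof. exact: sqrtr_ge0. Qed.

Lemma hnorm_sqr x : hnorm x ^+ 2 = re_ip x x.
Proof. by rewrite sqr_sqrtr // re_ip_ge0. Qed.

Lemma hnorm_eq0 x : hnorm x = 0 -> x = 0.
Proof.
move=> x0; case: ip_inner => _ _ ip_ge0 ip_eq0; apply: ip_eq0.
have : re_ip x x = 0 by rewrite -hnorm_sqr x0 expr0n.
have := ip_ge0 x; rewrite lecE /re_ip.
by case: (ip x x) => a b /= /andP[/eqP -> _] ->.
Qed.

Lemma hnorm0 : hnorm 0 = 0.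
Proof. by rewrite /Defs.hnorm ip0l sqrtr0. Qed.

Lemma hnormD_sqr x y : hnorm (x + y) ^+ 2 = hnorm x ^+ 2 + 2 * re_ip x y + hnorm y ^+ 2.
Proof. by rewrite !hnorm_sqr re_ipDl !re_ipDr (re_ipC y x); ring. Qed.

Lemma hnormB_sqr x y : hnorm (x - y) ^+ 2 = hnorm x ^+ 2 - 2 * re_ip x y + hnorm y ^+ 2.
Proof. by rewrite !hnorm_sqr re_ipBl !re_ipBr (re_ipC y x); ring. Qed.

Lemma hnormZ r x : hnorm ((r%:C)%C *: x) = `|r| * hnorm x.
Proof.
rewrite /Defs.hnorm -/(re_ip _ _) re_ipZl re_ipZr mulrA -expr2.
by rewrite sqrtrM ?sqr_ge0 ?sqrtr_sqr.
Qed.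

Lemma hnormN x : hnorm (- x) = hnorm x.
Proof.
by rewrite -scaleN1r -(rmorphN1 (real_complex R)) hnormZ normrN normr1 mul1r.
Qed.

Lemma re_ip_le x y : re_ip x y <= hnorm x * hnorm y.
Proof.
have CS : re_ip x y ^+ 2 <= hnorm x ^+ 2 * hnorm y ^+ 2.
  apply: quadratic_ge0_discr; last exact: sqr_ge0.
  move=> t; have := sqr_ge0 (hnorm (x + (t%:C)%C *: y)).
  by rewrite hnormD_sqr re_ipZr hnormZ exprMn real_normK ?num_real // mulrA.
rewrite -exprMn in CS; have := mulr_ge0 (hnorm_ge0 x) (hnorm_ge0 y); nra.
Qed.

Lemma norm_re_ip_le x y : `|re_ip x y| <= hnorm x * hnorm y.
Proof.
rewrite ler_norml re_ip_le andbT lerNl -(hnormN x).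
have -> : - re_ip x y = re_ip (- x) y by rewrite /re_ip -scaleN1r ipZl mulN1r raddfN.
exact: re_ip_le.
Qed.

Lemma hnormD x y : hnorm (x + y) <= hnorm x + hnorm y.
Proof.
rewrite -ler_sqr ?nnegrE ?addr_ge0 ?hnorm_ge0 // hnormD_sqr sqrrD.
by have := re_ip_le x y; nra.
Qed.

Lemma hdistC x y : hdist x y = hdist y x.
Proof. by rewrite /Defs.hdist -hnormN opprB. Qed.

Lemma hdist_triangle x y z : hdist x z <= hdist x y + hdist y z.
Proof. by rewrite /Defs.hdist (_ : x - z = x - y + (y - z)) ?hnormD // addrA subrK. Qed.

Lemma hnorm_lin_sub x y x' y' r :
  hnorm ((x + (r%:C)%C *: y) - (x' + (r%:C)%C *: y')) <=
  hnorm (x - x') + `|r| * hnorm (y - y').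
Proof.
rewrite -hnormZ (_ : _ - _ = (x - x') + (r%:C)%C *: (y - y')) ?hnormD //.
by rewrite scalerBr opprD !addrA [x - x' + _]addrAC.
Qed.

Lemma hcvg_unique u l1 l2 : hcvg ip u l1 -> hcvg ip u l2 -> l1 = l2.
Proof.
move=> ul1 ul2; apply/eqP; rewrite -subr_eq0; apply/eqP/hnorm_eq0/eqP.
rewrite eq_le hnorm_ge0 andbT; apply/ler_addgt0Pr => e e0; rewrite add0r.
have e2 : 0 < e / 2 by rewrite divr_gt0.
have [N1 uN1] := ul1 _ e2; have [N2 uN2] := ul2 _ e2.
have := uN1 (maxn N1 N2) (leq_maxl _ _); have := uN2 (maxn N1 N2) (leq_maxr _ _).
have := hdist_triangle l1 (u (maxn N1 N2)) l2; rewrite (hdistC l1 (u _)).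
rewrite /Defs.hdist; lra.
Qed.

Lemma hlimE u l : hcvg ip u l -> hlim ip u = l.
Proof.
move=> ul; apply: (hcvg_unique _ ul).
exact: (epsilon_spec (inhabits (0 : H)) (hcvg ip u) (ex_intro _ l ul)).
Qed.

Lemma hcvgD u v l l' r : hcvg ip u l -> hcvg ip v l' ->
  hcvg ip (fun n => u n + (r%:C)%C *: v n) (l + (r%:C)%C *: l').
Proof.
move=> ul vl' e e0; have e2 : 0 < e / 2 by rewrite divr_gt0.
have [N1 uN1] := ul _ e2.
have [N2 vN2] := vl' _ (divr_gt0 e2 (ltr_pwDr ltr01 (normr_ge0 r))).
exists (maxn N1 N2) => n n_ge; apply: le_lt_trans (hnorm_lin_sub _ _ _ _ _) _.
apply: add_scaled_lt_half; first exact: hnorm_ge0.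
  exact: uN1 (leq_trans (leq_maxl _ _) n_ge).
exact: vN2 (leq_trans (leq_maxr _ _) n_ge).
Qed.

Lemma hcvg_re_ip u l z : hcvg ip u l -> (fun n => re_ip (u n) z) @ \oo --> re_ip l z.
Proof.
move=> ul; apply/cvgrPdist_lt => e e0.
have z1 : 0 < hnorm z + 1 by rewrite ltr_pwDr ?hnorm_ge0.
have [N uN] := ul _ (divr_gt0 e0 z1); exists N => // n /uN un /=.
rewrite -re_ipBl (le_lt_trans (norm_re_ip_le _ _)) // -/(hdist l (u n)) hdistC.
apply: le_lt_trans (ler_wpM2r (hnorm_ge0 z) (ltW un)) _.
by rewrite mulrAC ltr_pdivrMr // ltr_pM2l // ltrDl.
Qed.

Lemma hcauchy_geometric (u : nat -> H) (C rho : R) : 0 <= rho < 1 ->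
  (forall k, hnorm (u k.+1 - u k) <= C * rho ^+ k) -> hcauchy ip u.
Proof.
move=> rho01 uS; have /andP[rho0 rho1] := rho01.
have rho1' : 0 < 1 - rho by rewrite subr_gt0.
have C0 : 0 <= C by have := le_trans (hnorm_ge0 _) (uS 0%N); rewrite expr0 mulr1.
have partial n j : hdist (u (j + n)%N) (u n) <= C * (rho ^+ n - rho ^+ (j + n)) / (1 - rho).
  elim: j => [|j IH]; first by rewrite add0n /Defs.hdist subrr hnorm0 subrr mulr0 mul0r.
  apply: le_trans (hdist_triangle _ (u (j + n)%N) _) _.
  have -> : C * (rho ^+ n - rho ^+ (j.+1 + n)) / (1 - rho) =
      C * rho ^+ (j + n) + C * (rho ^+ n - rho ^+ (j + n)) / (1 - rho).
    by rewrite addSn exprS; field; rewrite subr_eq0 eq_sym lt_eqF.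
  by rewrite lerD // /Defs.hdist addSn.
have tail n k : (n <= k)%N -> hdist (u k) (u n) <= C * rho ^+ n / (1 - rho).
  move=> /subnK <-; apply: le_trans (partial _ _) _.
  by rewrite ler_pM2r ?invr_gt0 // ler_wpM2l // gerBl exprn_ge0.
move=> e e0.
have [M _ uM] := geometric_eventually_lt (C / (1 - rho)) rho01 (divr_gt0 e0 (ltr0Sn _ 1)).
exists M => n k Mn Mk; apply: le_lt_trans (hdist_triangle _ (u M) _) _.
rewrite (hdistC (u M)); have := tail _ _ Mn; have := tail _ _ Mk; have := uM M (leqnn M).
rewrite mulrAC; lra.
Qed.

Section ClosedSpan.
Variables (I : choiceType) (F : I -> H).

Local Notation K := (closed_span ip F).

Lemma hspan_sum (s : seq I) (c : I -> R[i]) : hspan F (\sum_(i <- s) c i *: F i).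
Proof. by exists s, c. Qed.

Lemma hspan_add_term x a j : hspan F x -> hspan F (x + a *: F j).
Proof.
move=> [s [c ->]].
exists (j :: [seq i <- s | i != j]),
  (fun i => if i == j then (count_mem j s)%:R * c j + a else c i).
rewrite big_cons eqxx big_filter (bigID (pred1 j)) /=.
have -> : \sum_(i <- s | i == j) c i *: F i = (count_mem j s)%:R *: (c j *: F j).
  transitivity (\sum_(i <- s | i == j) c j *: F j); first by apply: eq_bigr => i /eqP ->.
  by rewrite big_const_seq iter_addr addr0 scaler_nat.
under [in RHS]eq_bigr => i /negbTE-> do [].
by rewrite scalerDl scalerA addrAC.
Qed.

Lemma hspanD x y : hspan F x -> hspan F y -> hspan F (x + y).
Proof.
move=> xF [s [c ->]]; elim: s x xF => [|i s IH] x xF; first by rewrite big_nil addr0.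
by rewrite big_cons addrA; apply/IH/hspan_add_term.
Qed.

Lemma hspanZ a x : hspan F x -> hspan F (a *: x).
Proof.
move=> [s [c ->]]; exists s, (fun i => a * c i).
by rewrite scaler_sumr; apply: eq_bigr => i _; rewrite scalerA.
Qed.

Lemma hspan_closed_span x : hspan F x -> K x.
Proof. by move=> xF e e0; exists x; rewrite /hdist subrr hnorm0. Qed.

Lemma closed_span0 : K 0.
Proof. by apply: hspan_closed_span; exists [::], (fun=> 0); rewrite big_nil. Qed.

Lemma closed_spanD x y r : K x -> K y -> K (x + (r%:C)%C *: y).
Proof.
move=> xK yK e e0; have e2 : 0 < e / 2 by rewrite divr_gt0.
have [x' [x'F xx']] := xK _ e2.
have [y' [y'F yy']] := yK _ (divr_gt0 e2 (ltr_pwDr ltr01 (normr_ge0 r))).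
exists (x' + (r%:C)%C *: y'); split; first by apply/hspanD/hspanZ.
rewrite /Defs.hdist; apply: le_lt_trans (hnorm_lin_sub _ _ _ _ _) _.
by apply: add_scaled_lt_half => //; exact: sqrtr_ge0.
Qed.

Lemma closed_spanB x y : K x -> K y -> K (x - y).
Proof. by rewrite -scaleN1r -(rmorphN1 (real_complex R)); exact: closed_spanD. Qed.

Lemma closed_span_lim u l : (forall n, K (u n)) -> hcvg ip u l -> K l.
Proof.
move=> uK ul e e0; have e2 : 0 < e / 2 by rewrite divr_gt0.
have [M uM] := ul _ e2; have [y [yF uy]] := uK M _ e2.
exists y; split=> //; have := uM M (leqnn M); have := hdist_triangle l (u M) y.
by rewrite (hdistC l (u M)); lra.
Qed.

Section FrameOperator.
Hypothesis H_complete : hcomplete ip.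
Variable Iseq : nat -> {fset I}.
Hypotheses (Iseq_nest : forall n, (Iseq n `<=` Iseq n.+1)%fset)
  (Iseq_cover : forall i : I, exists n, i \in Iseq n).
Variables A B : R.
Hypotheses (A_gt0 : 0 < A) (A_le_B : A <= B).
Hypothesis F_frame : forall g, K g ->
  ((A * hnorm g ^+ 2)%:E <= \esum_(i in [set: I]) (abs2 (ip g (F i)))%:E
     <= (B * hnorm g ^+ 2)%:E)%E.

Local Notation S := (frame_op ip Iseq F).
Implicit Types (g h : H) (D : {fset I}).

Let B_gt0 : 0 < B. Proof. exact: lt_le_trans A_gt0 A_le_B. Qed.

Definition partial_frame_op (s : seq I) h := \sum_(j <- s) ip h (F j) *: F j.
Definition coef_sqsum (s : seq I) h := \sum_(j <- s) abs2 (ip h (F j)).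

Lemma re_ip_comb (s : seq I) (a : I -> R[i]) z :
  re_ip (\sum_(j <- s) a j *: F j) z = \sum_(j <- s) complex.Re (a j * (ip z (F j))^*).
Proof. by rewrite /re_ip ip_suml raddf_sum; apply: eq_bigr => j _; rewrite ipZl (ipC z). Qed.

Lemma re_ip_partial_frame_op (s : seq I) h : re_ip (partial_frame_op s h) h = coef_sqsum s h.
Proof. exact: re_ip_comb. Qed.

Lemma coef_sqsum_ge0 (s : seq I) h : 0 <= coef_sqsum s h.
Proof. by apply: sumr_ge0 => j _; exact: abs2_ge0. Qed.

Lemma coef_sqsum_le D h : K h -> coef_sqsum D h <= B * hnorm h ^+ 2.
Proof.
move=> /F_frame/andP[_ le_B]; rewrite -lee_fin; apply: le_trans le_B.
rewrite /coef_sqsum -sumEFin (fsbig_seq _ _ (fset_uniq D)).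
by apply: esum_ge; exists [set` D] => //; split=> //; exact: finite_fset.
Qed.

Lemma Iseq_cover_seq (s : seq I) : exists n, {subset s <= Iseq n}.
Proof.
elim: s => [|i s [n sn]]; first by exists 0%N.
have [k ik] := Iseq_cover i; exists (maxn n k) => j; rewrite inE => /predU1P[->|/sn js].
  exact: (fsubsetP (Iseq_homo Iseq_nest (leq_maxr _ _))).
exact: (fsubsetP (Iseq_homo Iseq_nest (leq_maxl _ _))).
Qed.

Lemma coef_sqsum_splitS n k h : (n <= k)%N ->
  coef_sqsum (Iseq k) h = coef_sqsum (Iseq n) h + coef_sqsum (Iseq k `\` Iseq n)%fset h.
Proof. by move=> nk; rewrite /coef_sqsum (sum_fsetDS _ (Iseq_homo Iseq_nest nk)). Qed.

Lemma partial_frame_op_splitS n k h : (n <= k)%N ->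
  partial_frame_op (Iseq k) h =
  partial_frame_op (Iseq n) h + partial_frame_op (Iseq k `\` Iseq n)%fset h.
Proof. by move=> nk; rewrite /partial_frame_op (sum_fsetDS _ (Iseq_homo Iseq_nest nk)). Qed.

Lemma coef_sqsum_homo h :
  {homo (fun n => coef_sqsum (Iseq n) h) : n k / (n <= k)%N >-> n <= k}.
Proof. by move=> n k nk; rewrite (coef_sqsum_splitS h nk) lerDl coef_sqsum_ge0. Qed.

Lemma coef_sqsum_lower h e : K h -> 0 < e ->
  exists n, A * hnorm h ^+ 2 - e < coef_sqsum (Iseq n) h.
Proof.
move=> /F_frame/andP[A_le _] e0.
have /ereal_sup_gt[_ [X [X_fin _] <-]] :
    ((A * hnorm h ^+ 2 - e)%:E < \esum_(i in [set: I]) (abs2 (ip h (F i)))%:E)%E.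
  by apply: lt_le_trans A_le; rewrite lte_fin ltrBlDr ltrDl.
rewrite fsbig_finite // sumEFin lte_fin => lt_X.
have [n Xn] := Iseq_cover_seq (fset_set X); exists n; apply: lt_le_trans lt_X _.
have X_sub : (fset_set X `<=` Iseq n)%fset by apply/fsubsetP => i /Xn.
by rewrite /coef_sqsum (sum_fsetDS _ X_sub) lerDl coef_sqsum_ge0.
Qed.

(* Apply the upper frame bound to [v] itself, then AM-GM with weight [B]. *)
Lemma synthesis_bound D (a : I -> R[i]) :
  hnorm (\sum_(j <- D) a j *: F j) ^+ 2 <= B * \sum_(j <- D) abs2 (a j).
Proof.
set v := \sum_(j <- D) a j *: F j.
have vK : K v by apply/hspan_closed_span/hspan_sum.
have amgm : 2 * hnorm v ^+ 2 <= B * \sum_(j <- D) abs2 (a j) + B^-1 * coef_sqsum D v.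
  rewrite hnorm_sqr {2}/v re_ip_comb mulr_sumr /coef_sqsum !mulr_sumr -big_split /=.
  by apply: ler_sum => j _; exact: Re_mulJ_le_abs2.
have : B^-1 * coef_sqsum D v <= hnorm v ^+ 2.
  by rewrite ler_pdivrMl // coef_sqsum_le.
lra.
Qed.

Lemma partial_frame_op_cauchy h : K h -> hcauchy ip (fun n => partial_frame_op (Iseq n) h).
Proof.
move=> hK e e0; pose E := range (fun n => coef_sqsum (Iseq n) h).
have E_sup : has_sup E.
  split; first by exists (coef_sqsum (Iseq 0) h), 0%N.
  by exists (B * hnorm h ^+ 2) => _ [n _ <-]; exact: coef_sqsum_le.
have [_ [M _ <-] supM] := sup_adherent (divr_gt0 (exprn_gt0 2 e0) B_gt0) E_sup.
have close n k : (M <= n)%N -> (n <= k)%N ->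
    hdist (partial_frame_op (Iseq n) h) (partial_frame_op (Iseq k) h) < e.
  move=> Mn nk; rewrite hdistC /hdist (partial_frame_op_splitS h nk) addrC addKr.
  rewrite -ltr_sqr ?nnegrE ?hnorm_ge0 ?ltW //.
  apply: le_lt_trans (synthesis_bound _ _) _; rewrite -/(coef_sqsum _ h).
  have := coef_sqsum_splitS h nk; have := coef_sqsum_homo h Mn.
  have : coef_sqsum (Iseq k) h <= sup E by apply: sup_upper_bound => //; exists k.
  rewrite mulrC -ltr_pdivlMr //; lra.
exists M => n k Mn Mk; have [nk|kn] := leqP n k; first exact: close.
by rewrite hdistC; apply: close => //; exact: ltnW.
Qed.

Lemma frame_op_cvg h : K h -> hcvg ip (fun n => partial_frame_op (Iseq n) h) (S h).
Proof.
move=> /partial_frame_op_cauchy/H_complete[l hl].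
by rewrite /frame_op (hlimE hl).
Qed.

Lemma frame_op_closed_span h : K h -> K (S h).
Proof.
move=> hK; apply: closed_span_lim (frame_op_cvg hK) => n.
exact/hspan_closed_span/hspan_sum.
Qed.

Lemma frame_opD g h r : K g -> K h -> S (g + (r%:C)%C *: h) = S g + (r%:C)%C *: S h.
Proof.
move=> gK hK; apply: hlimE.
rewrite (_ : (fun n => _) = fun n =>
    partial_frame_op (Iseq n) g + (r%:C)%C *: partial_frame_op (Iseq n) h).
  exact: hcvgD (frame_op_cvg gK) (frame_op_cvg hK).
apply/funext => n; rewrite /partial_frame_op scaler_sumr -big_split.
by apply: eq_bigr => j _; rewrite ipDl ipZl scalerDl scalerA.
Qed.

Lemma frame_opB g h : K g -> K h -> S (g - h) = S g - S h.
Proof.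
move=> gK hK; rewrite -scaleN1r -(rmorphN1 (real_complex R)) frame_opD //.
by rewrite rmorphN1 scaleN1r.
Qed.

Lemma coef_sqsum_cvg h : K h -> (fun n => coef_sqsum (Iseq n) h) @ \oo --> re_ip (S h) h.
Proof.
move=> hK; have := hcvg_re_ip (z := h) (frame_op_cvg hK).
by rewrite (funext (fun n => re_ip_partial_frame_op (Iseq n) h)).
Qed.

Lemma coef_sqsum_le_frame_op n h : K h -> coef_sqsum (Iseq n) h <= re_ip (S h) h.
Proof.
move=> hK; apply: (closed_cvg _ (@closed_ge _ (coef_sqsum (Iseq n) h)) _ _
  (coef_sqsum_cvg hK)).
by exists n => // k; exact: coef_sqsum_homo.
Qed.

Lemma frame_op_lower h : K h -> A * hnorm h ^+ 2 <= re_ip (S h) h.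
Proof.
move=> hK; apply/ler_addgt0Pr => e e0.
have [n ltn] := coef_sqsum_lower hK e0.
by have := coef_sqsum_le_frame_op n hK; lra.
Qed.

Lemma frame_op_norm_sqr_le h : K h -> hnorm (S h) ^+ 2 <= B * re_ip (S h) h.
Proof.
move=> hK; have ShK := frame_op_closed_span hK.
have bound n : 2 * re_ip (partial_frame_op (Iseq n) h) (S h) <=
    B * re_ip (S h) h + hnorm (S h) ^+ 2.
  rewrite /partial_frame_op re_ip_comb mulr_sumr.
  apply: le_trans (ler_sum _ (fun j _ =>
    Re_mulJ_le_abs2 (ip h (F j)) (ip (S h) (F j)) B_gt0)) _.
  rewrite big_split /= -!mulr_sumr -/(coef_sqsum _ h) -/(coef_sqsum _ (S h)).
  apply: lerD; first by rewrite ler_pM2l // coef_sqsum_le_frame_op.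
  by rewrite ler_pdivrMl // coef_sqsum_le.
have : 2 * re_ip (S h) (S h) <= B * re_ip (S h) h + hnorm (S h) ^+ 2.
  apply: (closed_cvg _ (@closed_le _ (B * re_ip (S h) h + hnorm (S h) ^+ 2)) _ _
    (cvgMl_tmp (a := 2) (hcvg_re_ip (z := S h) (frame_op_cvg hK)))).
  by exists 0%N => // n _; exact: bound.
by rewrite hnorm_sqr; lra.
Qed.

Lemma frame_op_contraction h : K h ->
  hnorm (h - ((B^-1)%:C)%C *: S h) ^+ 2 <= (1 - A / B) * hnorm h ^+ 2.
Proof.
move=> hK; have := frame_op_lower hK; have := frame_op_norm_sqr_le hK.
rewrite hnormB_sqr re_ipZr hnormZ exprMn (re_ipC h) ger0_norm; last by rewrite invr_ge0 ltW.
move=> NS_le A_le; have BV : B^-1 * B = 1 by rewrite mulVf ?gt_eqF.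
have BV_gt0 : 0 < B^-1 by rewrite invr_gt0.
have : B^-1 ^+ 2 * hnorm (S h) ^+ 2 <= B^-1 * re_ip (S h) h.
  by rewrite expr2 -mulrA ler_pM2l // -[re_ip _ _]mul1r -BV -mulrA ler_pM2l.
have : B^-1 * (A * hnorm h ^+ 2) <= B^-1 * re_ip (S h) h by rewrite ler_pM2l.
rewrite (_ : (1 - A / B) * _ = hnorm h ^+ 2 - B^-1 * (A * hnorm h ^+ 2)); last by ring.
lra.
Qed.

Lemma frame_op_bounded h : K h -> hnorm (S h) <= B * hnorm h.
Proof.
move=> hK; have [->|Sh_neq0] := eqVneq (hnorm (S h)) 0.
  by rewrite mulr_ge0 ?hnorm_ge0 ?ltW.
have Sh_gt0 : 0 < hnorm (S h) by rewrite lt0r Sh_neq0 hnorm_ge0.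
rewrite -(ler_pM2l Sh_gt0) -expr2 (le_trans (frame_op_norm_sqr_le hK)) //.
by rewrite mulrCA ler_pM2l // re_ip_le.
Qed.

Fixpoint richardson (f : H) (k : nat) : H :=
  if k is k.+1 then richardson f k + ((B^-1)%:C)%C *: (f - S (richardson f k)) else 0.

Lemma richardson_closed_span f k : K f -> K (richardson f k).
Proof.
move=> fK; elim: k => [|k IH]; first exact: closed_span0.
by apply/closed_spanD/closed_spanB => //; exact: frame_op_closed_span.
Qed.

Lemma richardson_residual_closed_span f k : K f -> K (f - S (richardson f k)).
Proof. by move=> fK; apply/closed_spanB/frame_op_closed_span/richardson_closed_span. Qed.

Lemma richardson_residualS f k : K f ->
  f - S (richardson f k.+1) =
  (f - S (richardson f k)) - ((B^-1)%:C)%C *: S (f - S (richardson f k)).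
Proof.
move=> fK; rewrite /= frame_opD ?opprD ?addrA //.
  exact: richardson_closed_span.
exact: richardson_residual_closed_span.
Qed.

Lemma frame_op0 : S 0 = 0.
Proof. by have := frame_opB closed_span0 closed_span0; rewrite subr0 subrr. Qed.

Lemma richardson_residual_le f k : K f ->
  hnorm (f - S (richardson f k)) <= Num.sqrt (1 - A / B) ^+ k * hnorm f.
Proof.
move=> fK; have q_ge0 : 0 <= 1 - A / B by rewrite subr_ge0 ler_pdivrMr // mul1r.
elim: k => [|k IH]; first by rewrite /= frame_op0 subr0 expr0 mul1r.
rewrite richardson_residualS // exprSr -mulrA (mulrC (Num.sqrt _)) mulrA.
apply: le_trans (_ : _ <= Num.sqrt (1 - A / B) * hnorm (f - S (richardson f k))) _.
  rewrite -ler_sqr ?nnegrE ?mulr_ge0 ?sqrtr_ge0 ?hnorm_ge0 //.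
  rewrite exprMn [Num.sqrt (1 - A / B) ^+ 2]sqr_sqrtr //.
  exact/frame_op_contraction/richardson_residual_closed_span.
by rewrite mulrC ler_wpM2r ?sqrtr_ge0.
Qed.

Lemma frame_op_surjective f : K f -> exists2 g, K g & S g = f.
Proof.
move=> fK; set rho := Num.sqrt (1 - A / B).
have rho01 : 0 <= rho < 1.
  by rewrite sqrtr_ge0 /= -sqrtr1 ltr_sqrt ?ltr01 // ltrBlDr ltrDl divr_gt0.
have step k : hnorm (richardson f k.+1 - richardson f k) <= B^-1 * hnorm f * rho ^+ k.
  have BV_ge0 : 0 <= B^-1 by rewrite invr_ge0 ltW.
  rewrite /= addrAC subrr add0r hnormZ ger0_norm // -mulrA ler_wpM2l // mulrC.
  exact: richardson_residual_le.
have [g gl] := H_complete (hcauchy_geometric rho01 step).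
have gK : K g := closed_span_lim (fun k => richardson_closed_span k fK) gl.
exists g => //; apply: (hcvg_unique (u := fun k => S (richardson f k))).
- move=> e e0; have [M gM] := gl _ (divr_gt0 e0 B_gt0); exists M => n /gM gn.
  have gnK := richardson_closed_span n fK.
  rewrite /hdist -frame_opB //; apply: le_lt_trans (frame_op_bounded _) _.
    exact: closed_spanB.
  by rewrite mulrC -ltr_pdivlMr.
- move=> e e0; have [M _ fM] := geometric_eventually_lt (hnorm f) rho01 e0.
  exists M => n /fM; rewrite hdistC; apply: le_lt_trans.
  by rewrite mulrC; exact: richardson_residual_le.
Qed.

Lemma canonical_dual_spec i :
  K (canonical_dual ip Iseq F i) /\ S (canonical_dual ip Iseq F i) = F i.
Proof.
have FiK : K (F i).
  by apply: hspan_closed_span; exists [:: i], (fun=> 1); rewrite big_seq1 scale1r.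
have [g gK Sg] := frame_op_surjective FiK.
exact: (epsilon_spec (inhabits (0 : H)) (fun g => K g /\ S g = F i)
  (ex_intro _ g (conj gK Sg))).
Qed.

Lemma dual_coef_bound i : 0 <= complex.Re (ip (F i) (canonical_dual ip Iseq F i)) <= 1.
Proof.
have [dK Sd] := canonical_dual_spec i; set d := canonical_dual _ _ _ _ in dK Sd *.
have -> : complex.Re (ip (F i) d) = re_ip (S d) d by rewrite Sd.
have [n iIn] := Iseq_cover i.
have abs2_le : abs2 (ip d (F i)) <= re_ip (S d) d.
  apply: le_trans (coef_sqsum_le_frame_op n dK).
  rewrite /coef_sqsum (big_fsetD1 i iIn) /= lerDl.
  by apply: sumr_ge0 => j _; exact: abs2_ge0.
have le_abs2 : re_ip (S d) d ^+ 2 <= abs2 (ip d (F i)).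
  by rewrite Sd /re_ip (ipC d) ReJ Re2_le_abs2.
have abs2_d_ge0 := abs2_ge0 (ip d (F i)).
by apply/andP; split; nra.
Qed.

Lemma b_seq_frame_compatible : frame_compatible Iseq (b_seq ip Iseq F).
Proof.
have b_bnd (s : seq I) :
    0 <= \sum_(j <- s) complex.Re (ip (F j) (canonical_dual ip Iseq F j)) <= (size s)%:R.
  rewrite sumr_ge0 => [/=|j _]; last by case/andP: (dual_coef_bound j).
  rewrite -[(size s)%:R]addr0 -count_predT -iter_addr -big_const_seq.
  by apply: ler_sum => j _; case/andP: (dual_coef_bound j).
split=> [n||n]; first by case/andP: (b_bnd (Iseq n)).
  exact: b_bnd.
rewrite /b_seq (sum_fsetDS _ (Iseq_nest n)) addrAC subrr add0r; exact: b_bnd.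
Qed.

End FrameOperator.
End ClosedSpan.

End InnerProductSpace.

Lemma frame_compatible_b_seq (R : realType) (H : lmodType R[i]) (ip : H -> H -> R[i])
    (I : choiceType) (Iseq : nat -> {fset I}) (F : I -> H) :
  inner_product ip -> hcomplete ip ->
  (forall n, (Iseq n `<=` Iseq n.+1)%fset) -> (forall i : I, exists n, i \in Iseq n) ->
  frame_for_span ip F -> frame_compatible Iseq (b_seq ip Iseq F).
Proof.
move=> ip_inner H_complete Iseq_nest Iseq_cover [A [B [A_gt0 [B_gt0 F_frame]]]].
apply: (b_seq_frame_compatible ip_inner H_complete Iseq_nest Iseq_cover
  (A := Num.min A B) (B := B)) => [||g /F_frame/andP[A_le ->]].
- by rewrite lt_min A_gt0.
- by rewrite ge_min lexx orbT.
by rewrite andbT (le_trans _ A_le) // lee_fin ler_wpM2r ?sqr_ge0 // ge_min lexx.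
Qed.

Theorem corollary5p24 (R : realType) (I : choiceType) (Iseq : nat -> {fset I})
  (Hnest : forall n, (Iseq n `<=` Iseq n.+1)%fset)
  (Hcover : forall i : I, exists n, i \in Iseq n)
  (Hne : inhabited I)
  (H : lmodType R[i]) (ip : H -> H -> R[i])
  (Hip : inner_product ip) (Hcompl : hcomplete ip) (Hsep : hseparable ip)
  (W : topologicalType) (HWc : compact [set: W]) (HWh : hausdorff_space W)
  (m : (nat -> R) -> W -> R) (Hm : sequence_measure_function Iseq m)
  (p : set_system nat) (Hp : free_ultrafilter p) :
  exists w : W, forall F : I -> H, frame_for_span ip F ->
    ultra_mu ip Iseq F p = m (b_seq ip Iseq F) w.
Proof.
case: Hp => p_ultra p_free.
have [w w_plim] := m_represents_plim_ratio Hnest Hcover Hne HWc Hm p_ultra p_free.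
exists w => F F_frame; rewrite w_plim //.
exact/frame_compatible_XR/(frame_compatible_b_seq Hip Hcompl Hnest Hcover).
Qed.
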